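(* Let $X$ be a pure $d$-dimensional simplicial complex, $0\le k\le d-1$, let $\sigma\in X(k+i)$ with $i\ge1$, and let $c\subseteq\sigma$ with $|c|=k$. Then there exists exactly one face $r$ of $R_k(X)$ with $\bigcup r=\sigma$ and $\bigcap r=c$.
   Context: $X(j)$ = faces with $j+1$ elements. The representation complex $R_k(X)$ has vertex set $X(k)$ and, for $1\le i\le d-k$, $i$-faces the sets $S$ of $i+1$ distinct elements of $X(k)$ with $\bigcup S\in X(i+k)$ and $|\bigcap S|=k$ (plus the empty face). For a face $r$ of dimension $\ge1$, $\bigcap r$ is its core. *)

From mathcomp Require Import all_boot.
Set Implicit Arguments. Unset Strict Implicit. Unset Printing Implicit Defensive.

Definition simplicial_complex (T : finType) (X : {set {set T}}) : Prop :=
  forall s t : {set T}, s \in X -> t \subset s -> t \in X.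

Definition Xj (T : finType) (X : {set {set T}}) (j : nat) : {set {set T}} :=
  [set s in X | #|s| == j.+1].

Definition pure_dim (T : finType) (X : {set {set T}}) (d : nat) : Prop :=
  (exists s, s \in Xj X d) /\
  (forall s, s \in X -> #|s| <= d.+1) /\
  (forall s, s \in X -> exists t, t \in Xj X d /\ s \subset t).

Definition R_face (T : finType) (X : {set {set T}}) (d k : nat)
    (r : {set {set T}}) : Prop :=
  r \subset Xj X k /\
  (r = set0 \/ #|r| = 1 \/
   exists i, [/\ 1 <= i <= d - k, #|r| = i.+1,
                 \bigcup_(s in r) s \in Xj X (i + k)
               & #|\bigcap_(s in r) s| = k]).

(* The faces of R_k(X) with core c and union sigma are sets of (k+1)-subsets
   of sigma containing c, i.e. of sets w |: c with w in sigma :\: c.  Every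
   w in sigma :\: c must be covered, so such a face is the whole pencil
   [set w |: c | w in sigma :\: c].  Conversely, since sigma :\: c has
   i+1 >= 2 elements, the pencil covers sigma and its members meet exactly in
   c, and it is a face because sigma is. *)

From mathcomp Require Import all_boot.
From mathcomp Require Import zify.

Set Implicit Arguments.
Unset Strict Implicit.
Unset Printing Implicit Defensive.

Definition pencil (T : finType) (sigma c : {set T}) : {set {set T}} :=
  [set w |: c | w in sigma :\: c].

Section Pencil.
Variables (T : finType) (sigma c : {set T}).

Lemma card_pencil : #|pencil sigma c| = #|sigma :\: c|.
Proof.
apply: card_in_imset => w1 w2; rewrite !inE => /andP[w1c _] /andP[w2c _] e.
have : w1 \in w2 |: c by rewrite -e setU11.
by rewrite in_setU1 (negbTE w1c) orbF => /eqP.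
Qed.

Lemma bigcap_pencil : 1 < #|sigma :\: c| -> \bigcap_(s in pencil sigma c) s = c.
Proof.
move=> two_out; apply/eqP; rewrite eqEsubset; apply/andP; split; last first.
  by apply/bigcapsP => s /imsetP[w _ ->]; apply: subsetUr.
apply/subsetP => v /bigcapP v_in_all; apply: contraTT isT => vNc.
have [w w_out wNv] : exists2 w, w \in sigma :\: c & w != v.
  have : 0 < #|sigma :\: c :\ v| by rewrite (cardsD1 v) in two_out; lia.
  by rewrite card_gt0 => /set0Pn[w]; rewrite in_setD1 => /andP[wv ?]; exists w.
have := v_in_all _ (imset_f (fun w => w |: c) w_out).
by rewrite in_setU1 (negbTE vNc) orbF eq_sym (negbTE wNv).
Qed.

Hypothesis c_sub_sigma : c \subset sigma.

Lemma bigcup_pencil : c \proper sigma -> \bigcup_(s in pencil sigma c) s = sigma.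
Proof.
move=> /properP[_ [w0 w0_sigma w0Nc]].
have w0_out : w0 \in sigma :\: c by rewrite inE w0Nc.
apply/eqP; rewrite eqEsubset; apply/andP; split.
  apply/bigcupsP => s /imsetP[w]; rewrite inE => /andP[_ w_sigma] ->.
  by rewrite subUset sub1set w_sigma c_sub_sigma.
apply/subsetP => v v_sigma; apply/bigcupP.
have [vc | vNc] := boolP (v \in c).
  by exists (w0 |: c); [exact: imset_f | rewrite in_setU1 vc orbT].
by exists (v |: c); [apply: imset_f; rewrite inE vNc | rewrite setU11].
Qed.

Variable k : nat.
Hypothesis card_c : #|c| = k.

Lemma mem_pencil (s : {set T}) :
  reflect [/\ c \subset s, s \subset sigma & #|s| = k.+1] (s \in pencil sigma c).
Proof.
apply: (iffP imsetP) => [[w] | [c_sub_s s_sub_sigma card_s]].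
  rewrite inE => /andP[wNc w_sigma] ->; split; first exact: subsetUr.
    by rewrite subUset sub1set w_sigma c_sub_sigma.
  by rewrite cardsU1 wNc card_c.
have /cards1P[w s_out] : #|s :\: c| == 1.
  by rewrite cardsD (setIidPr c_sub_s) card_s card_c subSnn.
have : w \in s :\: c by rewrite s_out set11.
rewrite inE => /andP[wNc w_s].
exists w; first by rewrite inE wNc (subsetP s_sub_sigma).
apply/setP => x; rewrite in_setU1.
have [xc | xNc] := boolP (x \in c); first by rewrite orbT (subsetP c_sub_s).
rewrite orbF; apply/idP/eqP => [x_s | ->] //.
by apply/set1P; rewrite -s_out inE xNc.
Qed.

Lemma pencil_uniq (r : {set {set T}}) :
  {in r, forall s : {set T}, #|s| = k.+1} ->
  \bigcup_(s in r) s = sigma -> \bigcap_(s in r) s = c -> r = pencil sigma c.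
Proof.
move=> card_r cup_r cap_r.
have r_sub s : s \in r -> s \in pencil sigma c.
  move=> s_r; apply/mem_pencil; split; last exact: card_r.
    by rewrite -cap_r; apply: bigcap_inf.
  by rewrite -cup_r; apply: bigcup_sup.
apply/setP => s; apply/idP/idP => [|/imsetP[w]]; first exact: r_sub.
rewrite inE => /andP[wNc]; rewrite -{1}cup_r => /bigcupP[s' s'_r w_s'] ->.
have /imsetP[w' _ s'_def] := r_sub _ s'_r.
move: w_s'; rewrite s'_def in_setU1 (negbTE wNc) orbF => /eqP ->.
by rewrite -s'_def.
Qed.

End Pencil.

Lemma pencil_sub_Xj (T : finType) (X : {set {set T}}) (sigma c : {set T}) :
  simplicial_complex X -> sigma \in X -> c \subset sigma ->
  pencil sigma c \subset Xj X #|c|.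
Proof.
move=> scX sigma_X c_sub_sigma; apply/subsetP => s.
case/(mem_pencil c_sub_sigma (erefl #|c|)) => _ s_sub_sigma card_s.
by rewrite inE (scX _ _ sigma_X s_sub_sigma) card_s eqxx.
Qed.

Theorem mainTheorem12 (T : finType) (X : {set {set T}}) (d k i : nat)
    (sigma c : {set T}) :
  simplicial_complex X -> pure_dim X d -> k <= d - 1 -> 0 < d ->
  1 <= i -> sigma \in Xj X (k + i) ->
  c \subset sigma -> #|c| = k ->
  exists! r : {set {set T}},
    [/\ R_face X d k r, \bigcup_(s in r) s = sigma & \bigcap_(s in r) s = c].
Proof.
move=> scX [_ [dim_X _]] _ _ i_gt0 + c_sub_sigma card_c.
rewrite inE => /andP[sigma_X /eqP card_sigma].
have card_out : #|sigma :\: c| = i.+1.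
  by rewrite cardsD (setIidPr c_sub_sigma) card_sigma card_c; lia.
have cap_eq : \bigcap_(s in pencil sigma c) s = c by apply: bigcap_pencil; lia.
have cup_eq : \bigcup_(s in pencil sigma c) s = sigma.
  apply: bigcup_pencil => //.
  by rewrite properEcard c_sub_sigma card_sigma card_c; lia.
exists (pencil sigma c); split.
  split=> //; split; first by rewrite -card_c pencil_sub_Xj.
  right; right; exists i; split.
  - by have := dim_X _ sigma_X; rewrite card_sigma i_gt0 /=; lia.
  - by rewrite card_pencil.
  - by rewrite cup_eq addnC inE sigma_X card_sigma eqxx.
  - by rewrite cap_eq.
move=> r [[r_Xk _] cup_r cap_r].
apply/esym/(pencil_uniq c_sub_sigma card_c) => //.
by move=> s /(subsetP r_Xk); rewrite inE => /andP[_ /eqP].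
Qed.
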